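(* Let $H$ be a complex Hilbert space and $d$ a positive integer. Suppose that $A=(A_1,\ldots,A_d)$ is a $d$-tuple of commuting contractions on $H$ and $T=(T_1,\ldots,T_d)$ is the commuting operator-valued multishift on $\ell^2_H(\mathbb N^d)$ with operator weights $A^{(j)}_\alpha=A_j$ for all $\alpha\in\mathbb N^d$ and $j=1,\ldots,d$. Then $T$ satisfies the von Neumann's inequality if and only if $A$ satisfies the von Neumann's inequality.
   Context: $\mathbb N$ denotes the nonnegative integers; $\varepsilon_j\in\mathbb N^d$ has $1$ in the $j$-th place and $0$ elsewhere; $\mathbb D^d$ is the open unit polydisc. $\ell^2_H(\mathbb N^d)=\bigoplus_{\alpha\in\mathbb N^d}H$. Given bounded operators $A^{(j)}_\alpha:H\to H$, the operator-valued multishift with these operator weights is the $d$-tuple defined by $T_j(\oplus_\alpha x_\alpha)=\oplus_\alpha A^{(j)}_{\alpha-\varepsilon_j}x_{\alpha-\varepsilon_j}$ (the term being $0$ when $\alpha_j=0$). A commuting $d$-tuple $S$ of contractions satisfies the von Neumann's inequality if $\|p(S)\|\le\sup_{z\in\mathbb D^d}|p(z)|$ for every $p\in\mathbb C[z_1,\ldots,z_d]$, where $p(S)=\sum a_\alpha S_1^{\alpha_1}\cdots S_d^{\alpha_d}$ for $p=\sum a_\alpha z^\alpha$. *)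

From HB Require Import structures.
From mathcomp Require Import all_boot all_order all_algebra.
From mathcomp Require Import boolp classical_sets functions reals.
From mathcomp Require Import complex.
From mathcomp Require Import mpoly.
Set Implicit Arguments. Unset Strict Implicit. Unset Printing Implicit Defensive.
Import Order.TTheory GRing.Theory Num.Theory.
Local Open Scope ring_scope.

Section Defs.
Variable R : realType.
Local Notation C := (R[i]).

Definition is_inner_product (V : lmodType C) (ip : V -> V -> C) : Prop :=
  [/\ forall (a : C) (x y z : V), ip (a *: x + y) z = a * ip x z + ip y z,
      forall x y : V, ip y x = conjc (ip x y),
      forall x : V, 0 <= ip x x &
      forall x : V, ip x x = 0 -> x = 0].

Definition ipnorm (V : lmodType C) (ip : V -> V -> C) (x : V) : R :=
  Num.sqrt (complex.Re (ip x x)).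

Definition ip_complete (V : lmodType C) (ip : V -> V -> C) : Prop :=
  forall u : nat -> V,
    (forall e : R, 0 < e -> exists N : nat, forall m n : nat,
        (N <= m)%N -> (N <= n)%N -> ipnorm ip (u m - u n) < e) ->
    exists l : V, forall e : R, 0 < e -> exists N : nat, forall n : nat,
        (N <= n)%N -> ipnorm ip (u n - l) < e.

Definition is_hilbert (V : lmodType C) (ip : V -> V -> C) : Prop :=
  is_inner_product ip /\ ip_complete ip.

Definition is_linear_op (V : lmodType C) (S : V -> V) : Prop :=
  forall (a : C) (x y : V), S (a *: x + y) = a *: S x + S y.

Definition is_contraction (V : lmodType C) (ip : V -> V -> C) (S : V -> V) : Prop :=
  is_linear_op S /\ forall x : V, ipnorm ip (S x) <= ipnorm ip x.

Definition commuting_tuple (X : Type) (d : nat) (S : 'I_d -> X -> X) : Prop :=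
  forall i j : 'I_d, S i \o S j = S j \o S i.

Definition op_monomial (X : Type) (d : nat) (S : 'I_d -> X -> X)
    (m : 'X_{1..d}) : X -> X :=
  \big[(@comp X X X)/id]_(j < d) iter (m j) (S j).

Definition op_poly (X : lmodType C) (d : nat) (S : 'I_d -> X -> X)
    (p : {mpoly C[d]}) (x : X) : X :=
  \sum_(m <- msupp p) p@_m *: op_monomial S m x.

Definition op_norm (X : Type) (D : set X) (nrm : X -> R) (S : X -> X) : R :=
  sup [set nrm (S x) | x in [set x | D x /\ nrm x <= 1]].

Definition polydisc (d : nat) : set ('I_d -> C) :=
  [set z | forall j : 'I_d, Normc.normc (z j) < 1].

Definition poly_sup_norm (d : nat) (p : {mpoly C[d]}) : R :=
  sup [set Normc.normc (p.@[z]) | z in @polydisc d].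

Definition von_neumann (X : lmodType C) (D : set X) (nrm : X -> R) (d : nat)
    (S : 'I_d -> X -> X) : Prop :=
  forall p : {mpoly C[d]}, op_norm D nrm (op_poly S p) <= poly_sup_norm p.

(** The Hilbert space l^2_H(N^d): H-valued families on N^d = 'X_{1..d}
    that are square summable; the squared norm is the sup of finite
    partial sums. *)
Definition l2_partial_sums (V : lmodType C) (ip : V -> V -> C) (d : nat)
    (x : 'X_{1..d} -> V) : set R :=
  [set \sum_(a <- s) ipnorm ip (x a) ^+ 2 | s in [set s : seq 'X_{1..d} | uniq s]].

Definition in_l2 (V : lmodType C) (ip : V -> V -> C) (d : nat) : set ('X_{1..d} -> V) :=
  [set x | has_ubound (l2_partial_sums ip x)].

Definition l2norm (V : lmodType C) (ip : V -> V -> C) (d : nat)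
    (x : 'X_{1..d} -> V) : R :=
  Num.sqrt (sup (l2_partial_sums ip x)).

Definition multishift (V : lmodType C) (d : nat)
    (W : 'I_d -> 'X_{1..d} -> V -> V) (j : 'I_d) (x : 'X_{1..d} -> V) :
    'X_{1..d} -> V :=
  fun alpha => if alpha j == 0%N then 0
               else W j (alpha - U_(j))%MM (x (alpha - U_(j))%MM).

End Defs.

(* Forward direction: truncate x to a box of side M and let N = M + msize p.
   Then p(T) maps the truncation into the box of side N, where the discrete
   Fourier transform over the N-th roots of unity turns p(T) into the family
   of operators p(cA), c on the discrete torus.  Here p(cA) is the polynomial
   z |-> p(cz) evaluated at A, whose sup norm on the polydisc is that of p, so
   Parseval's identity gives ||p(T)x|| <= sup |p| ||x||.
   Converse: applying p(T) to h spread uniformly over a box of side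
   M + msize p yields p(A)h at every point of a box of side M, hence
   M^d ||p(A)h||^2 <= (M + msize p)^d sup |p|^2 for every M. *)

From HB Require Import structures.
From mathcomp Require Import all_boot all_order all_algebra.
From mathcomp Require Import boolp classical_sets functions reals.
From mathcomp Require Import complex.
From mathcomp Require Import mpoly.
From mathcomp Require Import ring lra zify.
From mathcomp Require cyclic separable cyclotomic.
Set Implicit Arguments. Unset Strict Implicit. Unset Printing Implicit Defensive.
Import Order.TTheory GRing.Theory Num.Theory.
Local Open Scope ring_scope.

Section ComplexNorm.
Variable R : rcfType.

Lemma normc_ge0 (a : R[i]) : 0 <= Normc.normc a.
Proof. by case: a => a b; apply: sqrtr_ge0. Qed.

Lemma normc_real (r : R) : Normc.normc r%:C%C = `|r|.
Proof. by rewrite /= expr0n addr0 sqrtr_sqr. Qed.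

Lemma mulc_conj (a : R[i]) : a * conjc a = (Normc.normc a ^+ 2)%:C%C.
Proof. by rewrite -sqr_normc rmorphXn. Qed.

Lemma normc_expr (z : R[i]) n : Normc.normc (z ^+ n) = Normc.normc z ^+ n.
Proof.
elim: n => [|n IH]; first by rewrite !expr0 Normc.normc1.
by rewrite !exprS Normc.normcM IH.
Qed.

Lemma normc_eq1_neq0 (z : R[i]) : Normc.normc z = 1 -> z != 0.
Proof. by apply: contra_eqN => /eqP->; rewrite Normc.normc0 eq_sym oner_eq0. Qed.

End ComplexNorm.

Section InnerProduct.
Variables (R : realType) (V : lmodType R[i]) (ip : V -> V -> R[i]).
Hypothesis hip : is_inner_product ip.

Lemma ipDZl a x y z : ip (a *: x + y) z = a * ip x z + ip y z.
Proof. by case: hip. Qed.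

Lemma ipC x y : ip y x = conjc (ip x y).
Proof. by case: hip => _ ->. Qed.

Lemma ip0l z : ip 0 z = 0.
Proof.
have := ipDZl 1 0 0 z; rewrite scaler0 addr0 mul1r => h.
by apply: (@addrI _ (ip 0 z)); rewrite addr0 -h.
Qed.

Lemma ipDl x y z : ip (x + y) z = ip x z + ip y z.
Proof. by rewrite -{1}[x]scale1r ipDZl mul1r. Qed.

Lemma ipZl a x z : ip (a *: x) z = a * ip x z.
Proof. by rewrite -[a *: x]addr0 ipDZl ip0l addr0. Qed.

Lemma ipDr x y z : ip z (x + y) = ip z x + ip z y.
Proof. by rewrite [LHS]ipC ipDl rmorphD (ipC x z) (ipC y z). Qed.

Lemma ipZr a x z : ip z (a *: x) = conjc a * ip z x.
Proof. by rewrite [LHS]ipC ipZl rmorphM (ipC x z). Qed.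

Lemma ip0r z : ip z 0 = 0.
Proof. by rewrite ipC ip0l rmorph0. Qed.

Lemma ip_suml (I : Type) (r : seq I) (F : I -> V) z :
  ip (\sum_(i <- r) F i) z = \sum_(i <- r) ip (F i) z.
Proof.
elim: r => [|a r IH]; first by rewrite !big_nil ip0l.
by rewrite !big_cons ipDl IH.
Qed.

Lemma ip_sumr (I : Type) (r : seq I) (F : I -> V) z :
  ip z (\sum_(i <- r) F i) = \sum_(i <- r) ip z (F i).
Proof.
elim: r => [|a r IH]; first by rewrite !big_nil ip0r.
by rewrite !big_cons ipDr IH.
Qed.

Lemma ipnorm_ge0 x : 0 <= ipnorm ip x.
Proof. exact: sqrtr_ge0. Qed.

Lemma ipnorm_sqrE x : ip x x = (ipnorm ip x ^+ 2)%:C%C.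
Proof.
case: hip => _ _ ge0 _; have := ge0 x; rewrite /ipnorm.
by case: (ip x x) => a b; rewrite lecE /= => /andP[/eqP -> a_ge0]; rewrite sqr_sqrtr.
Qed.

Lemma ipnorm_sqr x : ipnorm ip x ^+ 2 = complex.Re (ip x x).
Proof. by rewrite ipnorm_sqrE. Qed.

Lemma ipnorm_eq0 x : ipnorm ip x = 0 -> x = 0.
Proof. by case: hip => _ _ _ ip_eq0 nx0; apply: ip_eq0; rewrite ipnorm_sqrE nx0 expr0n. Qed.

Lemma ipnorm0 : ipnorm ip 0 = 0.
Proof. by rewrite /ipnorm ip0l sqrtr0. Qed.

Lemma ipnormZ a x : ipnorm ip (a *: x) = Normc.normc a * ipnorm ip x.
Proof.
rewrite {1}/ipnorm ipZl ipZr mulrA mulc_conj ipnorm_sqrE -rmorphM /=.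
by rewrite -exprMn sqrtr_sqr ger0_norm // mulr_ge0 ?normc_ge0 ?ipnorm_ge0.
Qed.

Lemma Re_ipC x y : complex.Re (ip y x) = complex.Re (ip x y).
Proof. by rewrite ipC; case: (ip x y). Qed.

Lemma ipnorm_sqr_lincomb (a b : R) x y :
  ipnorm ip (a%:C%C *: x + b%:C%C *: y) ^+ 2 =
  a ^+ 2 * ipnorm ip x ^+ 2 + 2 * a * b * complex.Re (ip x y) + b ^+ 2 * ipnorm ip y ^+ 2.
Proof.
have ReD (u v : R[i]) : complex.Re (u + v) = complex.Re u + complex.Re v.
  by case: u; case: v.
have ReM (r : R) (u : R[i]) : complex.Re (r%:C%C * u) = r * complex.Re u.
  by case: u => u1 u2 /=; rewrite mul0r subr0.
rewrite !ipnorm_sqr ipDl !ipDr !ipZl !ipZr !conjc_real !ReD !ReM Re_ipC.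
by rewrite !expr2; ring.
Qed.

Lemma Re_ip_le x y : complex.Re (ip x y) <= ipnorm ip x * ipnorm ip y.
Proof.
have [nx0|nx_neq0] := eqVneq (ipnorm ip x) 0.
  by rewrite nx0 mul0r (ipnorm_eq0 nx0) ip0l.
have [ny0|ny_neq0] := eqVneq (ipnorm ip y) 0.
  by rewrite ny0 mulr0 (ipnorm_eq0 ny0) ip0r.
set a := ipnorm ip x; set b := ipnorm ip y; set t := complex.Re _.
have a_gt0 : 0 < a by rewrite lt0r nx_neq0 ipnorm_ge0.
have b_gt0 : 0 < b by rewrite lt0r ny_neq0 ipnorm_ge0.
have := sqr_ge0 (ipnorm ip (b%:C%C *: x + (- a)%:C%C *: y)).
rewrite ipnorm_sqr_lincomb -/a -/b -/t => h.
have : 0 <= 2 * a * b * (a * b - t) by move: h; congr (_ <= _); ring.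
by rewrite pmulr_rge0 ?subr_ge0 // !mulr_gt0.
Qed.

Lemma ipnormD x y : ipnorm ip (x + y) <= ipnorm ip x + ipnorm ip y.
Proof.
have := ipnorm_sqr_lincomb 1 1 x y; rewrite !scale1r => nD.
rewrite -ler_sqr ?nnegrE ?addr_ge0 ?ipnorm_ge0 // nD.
have := Re_ip_le x y; rewrite sqrrD; nra.
Qed.

Lemma ipnorm_sum (I : Type) (r : seq I) (F : I -> V) :
  ipnorm ip (\sum_(i <- r) F i) <= \sum_(i <- r) ipnorm ip (F i).
Proof.
elim: r => [|a r IH]; first by rewrite !big_nil ipnorm0.
by rewrite !big_cons (le_trans (ipnormD _ _)) // lerD2l.
Qed.

End InnerProduct.

Section LinearOperators.
Variables (R : realType) (V : lmodType R[i]).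

Lemma linear_op0 (S : V -> V) : is_linear_op S -> S 0 = 0.
Proof.
move=> linS; have := linS 1 0 0; rewrite scaler0 addr0 scale1r => S0.
by apply: (@addrI _ (S 0)); rewrite addr0 -S0.
Qed.

Lemma linear_opD (S : V -> V) : is_linear_op S -> forall x y, S (x + y) = S x + S y.
Proof. by move=> linS x y; rewrite -[x in S (x + _)]scale1r linS scale1r. Qed.

Lemma linear_opZ (S : V -> V) : is_linear_op S -> forall a x, S (a *: x) = a *: S x.
Proof. by move=> linS a x; rewrite -[a *: x]addr0 linS linear_op0 // addr0. Qed.

Lemma linear_op_sum (S : V -> V) : is_linear_op S ->
  forall (I : Type) (r : seq I) (F : I -> V),
    S (\sum_(i <- r) F i) = \sum_(i <- r) S (F i).
Proof.
move=> linS I r F; elim: r => [|a r IH]; first by rewrite !big_nil linear_op0.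
by rewrite !big_cons linear_opD // IH.
Qed.

Lemma linear_op_comp (S1 S2 : V -> V) :
  is_linear_op S1 -> is_linear_op S2 -> is_linear_op (S1 \o S2).
Proof. by move=> lin1 lin2 a x y /=; rewrite lin2 lin1. Qed.

Lemma linear_op_iter (S : V -> V) n : is_linear_op S -> is_linear_op (iter n S).
Proof. by move=> linS; elim: n => [|n IH] // a x y /=; rewrite IH linS. Qed.

Lemma linear_op_monomial d (S : 'I_d -> V -> V) m :
  (forall j, is_linear_op (S j)) -> is_linear_op (op_monomial S m).
Proof.
move=> linS; apply: (big_ind (@is_linear_op R V)) => //.
- exact: linear_op_comp.
- by move=> j _; apply: linear_op_iter.
Qed.

Lemma linear_op_poly d (S : 'I_d -> V -> V) (p : {mpoly R[i][d]}) :
  (forall j, is_linear_op (S j)) -> is_linear_op (op_poly S p).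
Proof.
move=> linS a x y; rewrite /op_poly scaler_sumr -big_split /=.
apply: eq_bigr => m _.
by rewrite (linear_op_monomial m linS) scalerDr !scalerA mulrC.
Qed.

Variable ip : V -> V -> R[i].
Hypothesis hip : is_inner_product ip.

Lemma contraction_comp (S1 S2 : V -> V) :
  is_contraction ip S1 -> is_contraction ip S2 -> is_contraction ip (S1 \o S2).
Proof.
move=> [lin1 c1] [lin2 c2]; split; first exact: linear_op_comp.
by move=> x; apply: le_trans (c1 _) (c2 _).
Qed.

Lemma contraction_iter (S : V -> V) n :
  is_contraction ip S -> is_contraction ip (iter n S).
Proof. by move=> cS; elim: n => [|n IH]; [split | exact: contraction_comp]. Qed.

Lemma contraction_monomial d (S : 'I_d -> V -> V) m :
  (forall j, is_contraction ip (S j)) -> is_contraction ip (op_monomial S m).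
Proof.
move=> cS; apply: (big_ind (is_contraction ip)); first by split.
- exact: contraction_comp.
- by move=> j _; apply: contraction_iter.
Qed.

Lemma ipnorm_linear_le (S : V -> V) (B : R) : is_linear_op S ->
  (forall x, ipnorm ip x <= 1 -> ipnorm ip (S x) <= B) ->
  forall x, ipnorm ip (S x) <= B * ipnorm ip x.
Proof.
move=> linS SB x; have [nx0|nx_neq0] := eqVneq (ipnorm ip x) 0.
  by rewrite nx0 mulr0 (ipnorm_eq0 hip nx0) linear_op0 // ipnorm0.
set t := ipnorm ip x; have t_gt0 : 0 < t by rewrite lt0r nx_neq0 ipnorm_ge0.
have tV_ge0 : 0 <= t^-1 by rewrite invr_ge0 ltW.
have := SB ((t^-1)%:C%C *: x).
rewrite linear_opZ // !(ipnormZ hip) normc_real (ger0_norm tV_ge0).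
by rewrite mulVf ?gt_eqF // lexx => /(_ isT); rewrite ler_pdivrMl // mulrC.
Qed.

End LinearOperators.

Section OperatorNorm.
Variables (R : realType) (X : Type) (D : set X) (nrm : X -> R) (S : X -> X).

Lemma op_norm_le (B : R) : (exists x, D x /\ nrm x <= 1) ->
  (forall x, D x -> nrm x <= 1 -> nrm (S x) <= B) -> op_norm D nrm S <= B.
Proof.
move=> [x0 [Dx0 x0_le1]] SB; apply: ge_sup; first by exists (nrm (S x0)), x0.
by move=> _ [x [Dx x_le1] <-]; apply: SB.
Qed.

(* The a priori bound [K] is needed: the [sup] of a set with no upper bound is junk. *)
Lemma le_op_norm (K : R) x :
  (forall x, D x -> nrm x <= 1 -> nrm (S x) <= K) ->
  D x -> nrm x <= 1 -> nrm (S x) <= op_norm D nrm S.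
Proof.
move=> SK Dx x_le1; apply: ub_le_sup; last by exists x.
by exists K => _ [z [Dz z_le1] <-]; apply: SK.
Qed.

End OperatorNorm.

Section BigSupport.
Variables (T : eqType) (M : nmodType).

Lemma eq_big_uniq_support (r s : seq T) (F : T -> M) : uniq r -> uniq s ->
  (forall m, m \in r -> m \notin s -> F m = 0) ->
  (forall m, m \in s -> m \notin r -> F m = 0) ->
  \sum_(m <- r) F m = \sum_(m <- s) F m.
Proof.
move=> ur us Fr Fs.
rewrite -(big_rmcond_in (mem s)); last by move=> m mr /Fr; apply.
rewrite -[RHS](big_rmcond_in (mem r)); last by move=> m ms /Fs; apply.
rewrite -[LHS]big_filter -[RHS]big_filter; apply/perm_big/uniq_perm.
- exact: filter_uniq.
- exact: filter_uniq.
- by move=> m; rewrite !mem_filter andbC.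
Qed.

End BigSupport.

Lemma ler_sum_uniq_support (R : numDomainType) (T : eqType) (s t : seq T) (F : T -> R) :
  uniq s -> uniq t -> (forall a, 0 <= F a) -> (forall a, a \in s -> a \notin t -> F a = 0) ->
  \sum_(a <- s) F a <= \sum_(a <- t) F a.
Proof.
move=> us ut F_ge0 Fst.
rewrite -(big_rmcond_in (mem t)); last by move=> a /Fst.
rewrite [leRHS](bigID (mem s)) /=.
have -> : \sum_(a <- s | a \in t) F a = \sum_(a <- t | a \in s) F a.
  rewrite -[LHS]big_filter -[RHS]big_filter; apply/perm_big/uniq_perm.
  - exact: filter_uniq.
  - exact: filter_uniq.
  - by move=> a; rewrite !mem_filter andbC.
by rewrite lerDl sumr_ge0.
Qed.

Lemma mcoeff_sumX (n : nat) (R : nzRingType) (r : seq 'X_{1..n}) (f : 'X_{1..n} -> R) k :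
  uniq r -> (\sum_(m <- r) f m *: 'X_[m] : {mpoly R[n]})@_k = if k \in r then f k else 0.
Proof.
move=> ur; rewrite raddf_sum; under eq_bigr do rewrite /= mcoeffZ mcoeffX.
case: ifPn => kr.
  rewrite (bigD1_seq k) //= eqxx mulr1 big1 ?addr0 // => m.
  by rewrite eq_sym => /negbTE->; rewrite mulr0.
rewrite big1_seq // => m /= mr; case: eqP => [mk|]; last by rewrite mulr0.
by move: kr; rewrite -mk mr.
Qed.

Section OperatorPolynomials.
Variables (R : realType) (V : lmodType R[i]) (d : nat).

Definition coef_norm1 (p : {mpoly R[i][d]}) : R :=
  \sum_(m <- msupp p) Normc.normc p@_m.

Lemma coef_norm1_ge0 p : 0 <= coef_norm1 p.
Proof. by apply: sumr_ge0 => m _; apply: normc_ge0. Qed.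

Lemma op_poly_seqE (S : 'I_d -> V -> V) p (r : seq 'X_{1..d}) x :
  uniq r -> {subset msupp p <= r} ->
  op_poly S p x = \sum_(m <- r) p@_m *: op_monomial S m x.
Proof.
move=> ur pr; apply: eq_big_uniq_support => //.
- by move=> m /pr mr /negP.
- by move=> m _; rewrite mcoeff_msupp negbK => /eqP->; rewrite scale0r.
Qed.

Variable ip : V -> V -> R[i].
Hypothesis hip : is_inner_product ip.

Lemma ipnorm_op_poly_le (S : 'I_d -> V -> V) p x :
  (forall j, is_contraction ip (S j)) ->
  ipnorm ip (op_poly S p x) <= coef_norm1 p * ipnorm ip x.
Proof.
move=> cS; rewrite /op_poly /coef_norm1 mulr_suml.
apply: le_trans (ipnorm_sum hip _ _) _; apply: ler_sum => m _.
rewrite (ipnormZ hip) ler_wpM2l ?normc_ge0 //.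
by case: (contraction_monomial m cS) => _; apply.
Qed.

End OperatorPolynomials.

Section Rotation.
Variables (R : realType) (d : nat).
Implicit Types (c z : 'I_d -> R[i]) (p : {mpoly R[i][d]}).

Definition unimodular c := forall j, Normc.normc (c j) = 1.

Lemma mmap1D c m1 m2 : mmap1 c (m1 + m2)%MM = mmap1 c m1 * mmap1 c m2.
Proof. by apply: commr_mmap1_M => j a; apply: mulrC. Qed.

Lemma normc_mmap1 c m : unimodular c -> Normc.normc (mmap1 c m) = 1.
Proof.
move=> c1; apply: (big_ind (fun a => Normc.normc a = 1)).
- exact: Normc.normc1.
- by move=> a b a1 b1; rewrite Normc.normcM a1 b1 mulr1.
- by move=> j _; rewrite normc_expr c1 expr1n.
Qed.

Definition mrotate c p : {mpoly R[i][d]} :=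
  \sum_(m <- msupp p) (p@_m * mmap1 c m) *: 'X_[m].

Lemma mcoeff_mrotate c p m : (mrotate c p)@_m = p@_m * mmap1 c m.
Proof.
rewrite mcoeff_sumX ?msupp_uniq //; case: ifPn => // /memN_msupp_eq0->.
by rewrite mul0r.
Qed.

Lemma msupp_mrotate c p : {subset msupp (mrotate c p) <= msupp p}.
Proof.
move=> m; rewrite !mcoeff_msupp mcoeff_mrotate.
by apply: contraNN => /eqP->; rewrite mul0r.
Qed.

Lemma meval_mrotate c p z : (mrotate c p).@[z] = p.@[fun j => c j * z j].
Proof.
rewrite raddf_sum mevalE; apply: eq_bigr => m _.
rewrite /= mevalZ mevalX -mulrA /mmap1 -big_split /=; congr (_ * _).
by apply: eq_bigr => j _; rewrite exprMn.
Qed.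

Lemma poly_sup_norm_mrotate c p :
  unimodular c -> poly_sup_norm (mrotate c p) = poly_sup_norm p.
Proof.
move=> c1; have c_neq0 j : c j != 0 by apply: normc_eq1_neq0.
rewrite /poly_sup_norm; congr sup; apply/seteqP; split => _ [z z1 <-].
  exists (fun j => c j * z j); last by rewrite meval_mrotate.
  by move=> j; rewrite Normc.normcM c1 mul1r; apply: z1.
exists (fun j => (c j)^-1 * z j).
  by move=> j; rewrite Normc.normcM Normc.normcV c1 invr1 mul1r; apply: z1.
rewrite meval_mrotate; congr Normc.normc; apply: meval_eq => j.
by rewrite mulrA mulfV // mul1r.
Qed.

Lemma coef_norm1_mrotate c p :
  unimodular c -> coef_norm1 (mrotate c p) = coef_norm1 p.
Proof.
move=> c1; rewrite /coef_norm1.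
under eq_bigr do rewrite mcoeff_mrotate Normc.normcM normc_mmap1 // mulr1.
apply: eq_big_uniq_support; rewrite ?msupp_uniq //.
- by move=> m /msupp_mrotate->.
- move=> m _; rewrite mcoeff_msupp negbK mcoeff_mrotate mulf_eq0.
  rewrite (negbTE (normc_eq1_neq0 (normc_mmap1 m c1))) orbF => /eqP->.
  exact: Normc.normc0.
Qed.

Lemma op_poly_mrotate (V : lmodType R[i]) (S : 'I_d -> V -> V) c p x :
  op_poly S (mrotate c p) x = \sum_(m <- msupp p) (p@_m * mmap1 c m) *: op_monomial S m x.
Proof.
rewrite (op_poly_seqE _ _ (msupp_uniq p)); last exact: msupp_mrotate.
by apply: eq_bigr => m _; rewrite mcoeff_mrotate.
Qed.

End Rotation.

Lemma prim_root_exists (R : rcfType) N : (0 < N)%N -> exists w : R[i], N.-primitive_root w.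
Proof.
move=> N_gt0; pose p : {poly R[i]} := 'X^N - 1.
have [r Dp] := closed_field_poly_normal p.
rewrite (monicP _) ?monicXnsubC // scale1r in Dp.
have r_unity : all N.-unity_root r by apply/allP => z; rewrite -root_prod_XsubC -Dp.
have r_size : (N < (size r).+1)%N by rewrite -(size_prod_XsubC r id) -Dp size_XnsubC.
have [|z] := hasP (cyclic.has_prim_root N_gt0 r_unity _ r_size); last by exists z.
rewrite -separable.separable_prod_XsubC -Dp cyclotomic.separable_Xn_sub_1 //.
by rewrite pnatr_eq0 -lt0n.
Qed.

Section RootsOfUnity.
Variables (R : realType) (N : nat) (w : R[i]).
Hypothesis w_prim : N.-primitive_root w.

Lemma normc_prim_root_expr n : Normc.normc (w ^+ n) = 1.
Proof.
have N_gt0 := prim_order_gt0 w_prim.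
apply/eqP; rewrite -(pexpr_eq1 N_gt0) ?normc_ge0 // -normc_expr -exprM mulnC.
by rewrite exprM (prim_expr_order w_prim) expr1n Normc.normc1.
Qed.

Lemma sum_prim_root_orth a b : (a < N)%N -> (b < N)%N ->
  \sum_(t < N) (w ^+ t) ^+ a * conjc ((w ^+ t) ^+ b) = if a == b then N%:R else 0.
Proof.
move=> a_lt b_lt; set z := w ^+ a * conjc (w ^+ b).
have unit_conj n : w ^+ n * conjc (w ^+ n) = 1.
  by rewrite mulc_conj normc_prim_root_expr expr1n.
have -> : \sum_(t < N) (w ^+ t) ^+ a * conjc ((w ^+ t) ^+ b) = \sum_(t < N) z ^+ t.
  by apply: eq_bigr => t _; rewrite /z exprMn -!exprM -rmorphXn -exprM !(mulnC t).
have [ab|a_neq_b] := eqVneq a b.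
  by rewrite /z ab unit_conj; under eq_bigr do rewrite expr1n; rewrite sumr_const card_ord.
have zN : z ^+ N = 1.
  rewrite exprMn -rmorphXn -!exprM !(mulnC _ N) !exprM (prim_expr_order w_prim).
  by rewrite !expr1n rmorph1 mulr1.
have z_neq1 : z != 1.
  apply: contra a_neq_b => /eqP z1; have := congr1 ( *%R^~ (w ^+ b)) z1.
  rewrite mul1r -mulrA [conjc _ * _]mulrC unit_conj mulr1 => /eqP.
  by rewrite (eq_prim_root_expr w_prim) !modn_small.
have := subrX1 z N; rewrite zN subrr => /esym/eqP.
by rewrite mulf_eq0 subr_eq0 (negbTE z_neq1) => /eqP.
Qed.

End RootsOfUnity.

Lemma mnm_le_mdeg d (m : 'X_{1..d}) j : (m j <= mdeg m)%N.
Proof. by rewrite mdegE (bigD1 j) //= leq_addr. Qed.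

Lemma mnm_lt_msize (R : nzRingType) d (p : {mpoly R[d]}) m j : m \in msupp p -> (m j < msize p)%N.
Proof. by move=> m_supp; apply: leq_ltn_trans (msize_mdeg_lt m_supp); apply: mnm_le_mdeg. Qed.

Section Box.
Variable d : nat.

Definition box N : seq 'X_{1..d} :=
  [seq [multinom (b j : nat) | j < d] | b : {ffun 'I_d -> 'I_N} <- enum {ffun 'I_d -> 'I_N}].

Lemma box_uniq N : uniq (box N).
Proof.
rewrite map_inj_uniq ?enum_uniq // => b1 b2 /mnmP b12.
by apply/ffunP => j; apply: val_inj; have := b12 j; rewrite !mnmE.
Qed.

Lemma boxP N (a : 'X_{1..d}) : reflect (forall j, (a j < N)%N) (a \in box N).
Proof.
apply: (iffP mapP) => [[b _ ->] j|a_lt]; first by rewrite mnmE.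
exists [ffun j => Ordinal (a_lt j)]; first by rewrite mem_enum.
by apply/mnmP => j; rewrite mnmE ffunE.
Qed.

Lemma box_sub M N : (M <= N)%N -> {subset box M <= box N}.
Proof. by move=> MN a /boxP a_lt; apply/boxP => j; apply: leq_trans (a_lt j) MN. Qed.

Lemma sum_box_const N (W : nmodType) (v : W) : \sum_(a <- box N) v = v *+ (N ^ d).
Proof. by rewrite big_map big_enum /= sumr_const card_ffun !card_ord. Qed.

Lemma mem_box_mdeg N (a : 'X_{1..d}) : (mdeg a < N)%N -> a \in box N.
Proof. by move=> a_lt; apply/boxP => j; apply: leq_ltn_trans a_lt; apply: mnm_le_mdeg. Qed.

Lemma sum_box_shift (W : nmodType) (H : 'X_{1..d} -> W) M N (m : 'X_{1..d}) :
  (forall j, M + m j <= N)%N ->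
  (forall b, ~~ ((m <= b)%MM && ((b - m)%MM \in box M)) -> H b = 0) ->
  \sum_(b <- box N) H b = \sum_(a <- box N) H (a + m)%MM.
Proof.
move=> MmN H0; rewrite -(big_map (fun a => (a + m)%MM) xpredT H).
apply: eq_big_uniq_support.
- exact: box_uniq.
- by rewrite map_inj_uniq ?box_uniq //; apply: addIm.
- move=> b _ b_notin; apply: H0; apply: contra b_notin => /andP[m_le_b bm_box].
  apply/mapP; exists (b - m)%MM; last by rewrite submK.
  apply/boxP => j; move/boxP: bm_box => /(_ j); rewrite mnmBE.
  by have := MmN j; lia.
- move=> _ /mapP[a _ ->] am_notin; apply: H0; rewrite lem_addl addmK /=.
  apply: contra am_notin => /boxP a_lt; apply/boxP => j; rewrite mnmDE.
  by have := a_lt j; have := MmN j; lia.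
Qed.

End Box.

Section BoxFourier.
Variables (R : realType) (V : lmodType R[i]) (ip : V -> V -> R[i]).
Hypothesis hip : is_inner_product ip.
Variables (d N : nat) (w : R[i]).
Hypothesis w_prim : N.-primitive_root w.

Definition torus_point (k : {ffun 'I_d -> 'I_N}) : 'I_d -> R[i] := fun j => w ^+ k j.

Lemma torus_point_unimodular k : unimodular (torus_point k).
Proof. by move=> j; apply: normc_prim_root_expr w_prim _. Qed.

Definition box_dft k (u : 'X_{1..d} -> V) : V :=
  \sum_(a <- box d N) mmap1 (torus_point k) a *: u a.

Lemma box_character_orth (a b : 'X_{1..d}) : a \in box d N -> b \in box d N ->
  \sum_k mmap1 (torus_point k) a * conjc (mmap1 (torus_point k) b)
  = if a == b then (N ^ d)%N%:R else 0.
Proof.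
move=> /boxP a_lt /boxP b_lt.
have split_j k : mmap1 (torus_point k) a * conjc (mmap1 (torus_point k) b) =
    \prod_(j < d) ((w ^+ k j) ^+ a j * conjc ((w ^+ k j) ^+ b j)).
  by rewrite /mmap1 rmorph_prod -big_split.
under eq_bigr do rewrite split_j.
rewrite -(bigA_distr_bigA (fun j (t : 'I_N) => (w ^+ t) ^+ a j * conjc ((w ^+ t) ^+ b j))) /=.
under eq_bigr do rewrite (sum_prim_root_orth w_prim (a_lt _) (b_lt _)).
have [<-|a_neq_b] := eqVneq a b.
  by under eq_bigr do rewrite eqxx; rewrite prodr_const card_ord natrX.
have [j abj] : exists j, a j != b j.
  by apply/existsP; apply: contraNT a_neq_b => /existsPn ab; apply/eqP/mnmP => j; apply/eqP/negbNE.
by rewrite (bigD1 j) //= (negbTE abj) mul0r.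
Qed.

Lemma box_parseval (u : 'X_{1..d} -> V) :
  \sum_k ipnorm ip (box_dft k u) ^+ 2 =
  (N ^ d)%N%:R * \sum_(a <- box d N) ipnorm ip (u a) ^+ 2.
Proof.
have ip_dft k : ip (box_dft k u) (box_dft k u) =
    \sum_(a <- box d N) \sum_(b <- box d N)
      mmap1 (torus_point k) a * conjc (mmap1 (torus_point k) b) * ip (u a) (u b).
  rewrite (ip_suml hip); apply: eq_bigr => a _.
  rewrite (ipZl hip) (ip_sumr hip) mulr_sumr; apply: eq_bigr => b _.
  by rewrite (ipZr hip) mulrA.
apply: complexI; rewrite rmorphM rmorph_nat !rmorph_sum /=.
under eq_bigr do rewrite -(ipnorm_sqrE hip) ip_dft.
under [in RHS]eq_bigr do rewrite -(ipnorm_sqrE hip).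
rewrite exchange_big mulr_sumr; apply: eq_big_seq => a a_box /=.
rewrite exchange_big /=.
under eq_big_seq => b b_box do rewrite -mulr_suml (box_character_orth a_box b_box).
rewrite (bigD1_seq a) ?box_uniq //= eqxx big1 ?addr0 // => b b_neq_a.
by rewrite eq_sym (negbTE b_neq_a) mul0r.
Qed.

End BoxFourier.

Section Multishift.
Variables (R : realType) (V : lmodType R[i]) (d : nat).
Local Notation X := 'X_{1..d}.

Definition shift (mu : X) (B : V -> V) (x : X -> V) : X -> V :=
  fun beta => if (mu <= beta)%MM then B (x (beta - mu)%MM) else 0.

Lemma shift0 x : shift 0%MM id x = x.
Proof.
apply/funext => beta; rewrite /shift subm0.
by have -> : (0 <= beta)%MM by apply/mnm_lepP => j; rewrite mnm0E.
Qed.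

Lemma lem_addE (mu nu beta : X) :
  (mu + nu <= beta)%MM = (mu <= beta)%MM && (nu <= beta - mu)%MM.
Proof.
apply/mnm_lepP/andP => [le_beta|[/mnm_lepP le_mu /mnm_lepP le_nu] j].
  by split; apply/mnm_lepP => j; have := le_beta j; rewrite ?mnmDE ?mnmBE; lia.
by have := le_mu j; have := le_nu j; rewrite mnmDE mnmBE; lia.
Qed.

Lemma shift_comp mu nu (B B' : V -> V) x : B 0 = 0 ->
  shift mu B (shift nu B' x) = shift (mu + nu)%MM (B \o B') x.
Proof.
move=> B0; apply/funext => beta; rewrite /shift lem_addE submDA.
by case: (mu <= beta)%MM; case: (nu <= beta - mu)%MM.
Qed.

Variable A : 'I_d -> V -> V.
Hypothesis linA : forall j, is_linear_op (A j).
Local Notation T := (multishift (fun (j : 'I_d) (_ : X) => A j)).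

Lemma multishift_shift j x : T j x = shift U_(j)%MM (A j) x.
Proof. by apply/funext => beta; rewrite /multishift /shift lep1mP; case: eqP. Qed.

Lemma iter_multishift j n x : iter n (T j) x = shift (U_(j) *+ n)%MM (iter n (A j)) x.
Proof.
elim: n x => [|n IH] x; first by rewrite mulm0n shift0.
by rewrite /= IH multishift_shift shift_comp ?linear_op0 // mulmS.
Qed.

Lemma op_monomial_multishift m x : op_monomial T m x = shift m (op_monomial A m) x.
Proof.
have big_iter (r : seq 'I_d) y : (\big[comp/id]_(j <- r) iter (m j) (T j)) y =
    shift (\sum_(j <- r) U_(j) *+ m j)%MM (\big[comp/id]_(j <- r) iter (m j) (A j)) y.
  elim: r y => [|j r IH] y; first by rewrite !big_nil shift0.
  rewrite !big_cons /= IH iter_multishift shift_comp //.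
  exact/linear_op0/linear_op_iter.
by rewrite /op_monomial big_iter -multinomUE_id.
Qed.

Lemma op_poly_multishift (p : {mpoly R[i][d]}) x beta :
  op_poly T p x beta = \sum_(m <- msupp p) p@_m *:
     (if (m <= beta)%MM then op_monomial A m (x (beta - m)%MM) else 0).
Proof.
rewrite /op_poly fct_sumE; apply: eq_bigr => m _.
by rewrite scalrfctE op_monomial_multishift.
Qed.

End Multishift.

Section L2.
Variables (R : realType) (V : lmodType R[i]) (ip : V -> V -> R[i]).
Hypothesis hip : is_inner_product ip.
Variable d : nat.
Local Notation X := 'X_{1..d}.
Local Notation PS := (@l2_partial_sums R V ip d).

Lemma l2_partial_sums_neq0 (x : X -> V) : (PS x !=set0)%classic.
Proof. by exists 0, [::]; rewrite ?big_nil. Qed.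

Lemma le_l2_sup (x : X -> V) s : in_l2 ip x -> uniq s ->
  \sum_(a <- s) ipnorm ip (x a) ^+ 2 <= sup (PS x).
Proof. by move=> x_l2 us; apply: (ub_le_sup x_l2); exists s. Qed.

Lemma l2_sup_ge0 (x : X -> V) : in_l2 ip x -> 0 <= sup (PS x).
Proof. by move=> x_l2; have := le_l2_sup x_l2 (s := [::]) isT; rewrite big_nil. Qed.

Lemma in_l2_sup_le (x : X -> V) B :
  (forall s, uniq s -> \sum_(a <- s) ipnorm ip (x a) ^+ 2 <= B) ->
  in_l2 ip x /\ sup (PS x) <= B.
Proof.
move=> sB; have ub : ubound (PS x) B by move=> _ [s us <-]; apply: sB.
by split; [exists B | apply: ge_sup (l2_partial_sums_neq0 x) ub].
Qed.

Lemma in_l2_box (x : X -> V) N : (forall a, a \notin box d N -> x a = 0) ->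
  in_l2 ip x /\ sup (PS x) = \sum_(a <- box d N) ipnorm ip (x a) ^+ 2.
Proof.
move=> x0; have [x_l2 le_sup] :
    in_l2 ip x /\ sup (PS x) <= \sum_(a <- box d N) ipnorm ip (x a) ^+ 2.
  apply: in_l2_sup_le => s us; apply: ler_sum_uniq_support => //.
  - exact: box_uniq.
  - by move=> a; apply: sqr_ge0.
  - by move=> a _ /x0->; rewrite ipnorm0 // expr0n.
by split => //; apply/le_anti; rewrite le_sup le_l2_sup ?box_uniq.
Qed.

Lemma in_l2_0 : in_l2 ip (fun _ : X => 0 : V) /\ l2norm ip (fun _ : X => 0 : V) = 0.
Proof.
have [l2_0 sup_0] := in_l2_box (x := fun _ : X => 0 : V) (N := 0) (fun _ _ => erefl).
by split => //; rewrite /l2norm sup_0 big1 ?sqrtr0 // => a _; rewrite ipnorm0 // expr0n.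
Qed.

End L2.

Section MultishiftBound.
Variables (R : realType) (V : lmodType R[i]) (ip : V -> V -> R[i]).
Hypothesis hip : is_inner_product ip.
Variable d : nat.
Local Notation X := 'X_{1..d}.
Variable A : 'I_d -> V -> V.
Hypothesis linA : forall j, is_linear_op (A j).
Local Notation T := (multishift (fun (j : 'I_d) (_ : X) => A j)).
Variable p : {mpoly R[i][d]}.

Definition box_restrict M (x : X -> V) : X -> V :=
  fun a => if a \in box d M then x a else 0.

Lemma op_poly_multishift_restrict M x b : b \in box d M ->
  op_poly T p x b = op_poly T p (box_restrict M x) b.
Proof.
move=> /boxP b_lt; rewrite !op_poly_multishift //; apply: eq_bigr => m _.
case: ifP => // _; rewrite /box_restrict ifT //.
by apply/boxP => j; rewrite mnmBE; apply: leq_ltn_trans (leq_subr _ _) (b_lt j).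
Qed.

Lemma box_dft_op_poly_multishift M N w (k : {ffun 'I_d -> 'I_N}) (x : X -> V) :
  (M + msize p <= N)%N -> (forall a, a \notin box d M -> x a = 0) ->
  box_dft w k (op_poly T p x) = op_poly A (mrotate (torus_point w k) p) (box_dft w k x).
Proof.
move=> MN x0; rewrite /box_dft op_poly_mrotate.
under eq_bigr do rewrite op_poly_multishift // scaler_sumr.
rewrite exchange_big /=; apply: eq_big_seq => m m_supp.
have linAm := linear_op_monomial m linA.
rewrite (sum_box_shift (M := M) (m := m)) => [|j|b]; first last.
- rewrite negb_and; case: ifP => [_ /= bm_notin|]; last by rewrite !scaler0.
  by rewrite x0 // linear_op0 // !scaler0.
- by have := mnm_lt_msize j m_supp; lia.
rewrite linear_op_sum // scaler_sumr; apply: eq_bigr => a _.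
rewrite lem_addl addmK mmap1D (linear_opZ linAm) !scalerA; congr (_ *: _).
by rewrite [LHS]mulrC mulrA mulrAC.
Qed.

Lemma op_poly_multishift_interior N v (b : X) :
  (forall j, msize p <= b j < N)%N ->
  op_poly T p (box_restrict N (fun _ => v)) b = op_poly A p v.
Proof.
move=> b_int; rewrite op_poly_multishift //; apply: eq_big_seq => m m_supp.
have m_le_b : (m <= b)%MM.
  apply/mnm_lepP => j; have /andP[+ _] := b_int j; apply: leq_trans.
  exact/ltnW/mnm_lt_msize.
rewrite m_le_b /box_restrict ifT //; apply/boxP => j; rewrite mnmBE.
by have /andP[_ b_lt] := b_int j; apply: leq_ltn_trans (leq_subr _ _) b_lt.
Qed.

Variable K : R.
Hypothesis K_ge0 : 0 <= K.
Hypothesis mrotate_bound : forall c, unimodular c ->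
  forall y, ipnorm ip (op_poly A (mrotate c p) y) <= K * ipnorm ip y.

Lemma sum_op_poly_multishift_le x s : in_l2 ip x -> uniq s ->
  \sum_(b <- s) ipnorm ip (op_poly T p x b) ^+ 2 <= K ^+ 2 * sup (l2_partial_sums ip x).
Proof.
move=> x_l2 us; set M := (\sum_(b <- s) mdeg b).+1; set N := (M + msize p)%N.
have s_box : {subset s <= box d M}.
  by move=> b b_s; apply: mem_box_mdeg; rewrite ltnS (bigD1_seq b) //= leq_addr.
have [w w_prim] := prim_root_exists R (leq_trans (ltn0Sn _) (leq_addr (msize p) M)).
set x' := box_restrict M x.
have x'0 a : a \notin box d M -> x' a = 0 by rewrite /x' /box_restrict => /negbTE->.
have Nd_gt0 : (0 : R) < (N ^ d)%N%:R by rewrite ltr0n expn_gt0 addn_gt0.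
apply: (@le_trans _ _ (\sum_(b <- box d N) ipnorm ip (op_poly T p x' b) ^+ 2)).
  rewrite (eq_big_seq (fun b => ipnorm ip (op_poly T p x' b) ^+ 2)); last first.
    by move=> b /s_box b_box; rewrite (op_poly_multishift_restrict _ b_box).
  apply: ler_sum_uniq_support => //; first exact: box_uniq.
  - by move=> a; apply: sqr_ge0.
  - by move=> a /s_box /(box_sub (leq_addr _ _))->.
rewrite -(ler_pM2l Nd_gt0) -(box_parseval hip w_prim).
apply: (@le_trans _ _ (K ^+ 2 * \sum_k ipnorm ip (box_dft w k x') ^+ 2)).
  rewrite mulr_sumr; apply: ler_sum => k _.
  rewrite (box_dft_op_poly_multishift _ _ (leqnn N) x'0) -exprMn.
  rewrite ler_sqr ?nnegrE ?mulr_ge0 ?ipnorm_ge0 //.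
  exact/mrotate_bound/(torus_point_unimodular w_prim).
rewrite (box_parseval hip w_prim) mulrCA ler_pM2l // ler_wpM2l ?exprn_ge0 //.
apply: le_trans (le_l2_sup x_l2 (box_uniq d N)); apply: ler_sum => a _.
by rewrite /x' /box_restrict; case: ifP => // _; rewrite ipnorm0 // expr0n sqr_ge0.
Qed.

Lemma op_poly_multishift_le x : in_l2 ip x ->
  in_l2 ip (op_poly T p x) /\ l2norm ip (op_poly T p x) <= K * l2norm ip x.
Proof.
move=> x_l2; have [Tx_l2 le_sup] := in_l2_sup_le (fun s us => sum_op_poly_multishift_le x_l2 us).
split => //; rewrite /l2norm -(ger0_norm K_ge0) -sqrtr_sqr -sqrtrM ?sqr_ge0 //.
by rewrite ler_sqrt // mulr_ge0 ?sqr_ge0 ?l2_sup_ge0.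
Qed.

End MultishiftBound.

Section Bernoulli.
Variable R : realFieldType.

Lemma bernoulli_inequality (a : R) n : 0 <= a <= 1 -> 1 - n%:R * a <= (1 - a) ^+ n.
Proof.
move=> /andP[a_ge0 a_le1]; elim: n => [|n IH]; first by rewrite mul0r subr0 expr0.
have pow_ge0 : 0 <= (1 - a) ^+ n by rewrite exprn_ge0 // subr_ge0.
have : 0 <= (1 - a) * ((1 - a) ^+ n - (1 - n%:R * a)) by rewrite mulr_ge0 ?subr_ge0.
have : 0 <= n%:R * (a * a) by rewrite !mulr_ge0.
by rewrite exprS -natr1; nra.
Qed.

Lemma bernoulli_natr_expn (M D e : nat) : (0 < M + D)%N ->
  ((M + D) ^ e)%:R * (1 - e%:R * (D%:R / (M + D)%:R)) <= (M ^ e)%:R :> R.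
Proof.
move=> L_gt0; set L := (M + D)%N; set a := D%:R / L%:R.
have L_gt0' : (0 : R) < L%:R by rewrite ltr0n.
have a_01 : 0 <= a <= 1.
  by rewrite /a divr_ge0 ?ler0n //= ler_pdivrMr // mul1r ler_nat leq_addl.
rewrite !natrX; have -> : (M%:R : R) = L%:R * (1 - a).
  by rewrite mulrBr mulr1 mulrCA divff ?mulr1 ?gt_eqF // natrD addrK.
by rewrite exprMn ler_wpM2l ?exprn_ge0 ?ler0n ?bernoulli_inequality.
Qed.

End Bernoulli.

Lemma le_of_forall_expn_ratio (R : archiRealFieldType) (c s : R) (D e : nat) : 0 <= s ->
  (forall M, (0 < M)%N -> (M ^ e)%N%:R * c <= s * ((M + D) ^ e)%N%:R) -> c <= s.
Proof.
move=> s_ge0 bound; rewrite leNgt; apply/negP => s_lt_c.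
have c_gt0 : 0 < c := le_lt_trans s_ge0 s_lt_c.
have cs_gt0 : 0 < c - s by rewrite subr_gt0.
set B := c * e%:R * D%:R / (c - s).
have B_ge0 : 0 <= B by rewrite divr_ge0 ?mulr_ge0 ?ler0n // ltW.
set M := (Num.bound B).+1; set L := (M + D)%N; set r : R := D%:R / L%:R.
have L_gt0 : (0 : R) < L%:R by rewrite ltr0n addn_gt0.
have Le_gt0 : (0 : R) < (L ^ e)%N%:R by rewrite ltr0n expn_gt0 addn_gt0.
have B_lt_L : B < L%:R.
  apply: lt_le_trans (archi_boundP B_ge0) _.
  by rewrite ler_nat /L /M (leq_trans (leqnSn _) (leq_addr _ _)).
have cer_lt : c * (e%:R * r) < c - s.
  by rewrite /r !mulrA ltr_pdivrMr // [_ * L%:R]mulrC -ltr_pdivrMr.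
have L_pos : (0 < L)%N by rewrite addn_gt0.
have bound_L := ler_wpM2r (ltW c_gt0) (bernoulli_natr_expn R e L_pos).
have bound_M := bound M isT; rewrite -/L -/r in bound_L.
have : (L ^ e)%N%:R * ((1 - e%:R * r) * c - s) <= 0 by lra.
by rewrite pmulr_rle0 //; lra.
Qed.

Section BoxTest.
Variables (R : realType) (V : lmodType R[i]) (ip : V -> V -> R[i]).
Hypothesis hip : is_inner_product ip.
Variable d : nat.
Local Notation X := 'X_{1..d}.
Local Notation PS := (@l2_partial_sums R V ip d).
Variable A : 'I_d -> V -> V.
Hypothesis cA : forall j, is_contraction ip (A j).
Let linA j : is_linear_op (A j) := (cA j).1.
Local Notation T := (multishift (fun (j : 'I_d) (_ : X) => A j)).
Variables (p : {mpoly R[i][d]}) (S : R).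
Hypothesis T_le : forall x, in_l2 ip x -> l2norm ip x <= 1 ->
  in_l2 ip (op_poly T p x) /\ l2norm ip (op_poly T p x) <= S.

Lemma op_poly_box_test_le M h : (0 < M)%N -> ipnorm ip h <= 1 ->
  (M ^ d)%N%:R * ipnorm ip (op_poly A p h) ^+ 2 <= S ^+ 2 * ((M + msize p) ^ d)%N%:R.
Proof.
move=> M_gt0 h1; set N := (M + msize p)%N.
have Nd_gt0 : (0 : R) < (N ^ d)%N%:R by rewrite ltr0n expn_gt0 addn_gt0 M_gt0.
pose t : R := (Num.sqrt (N ^ d)%N%:R)^-1.
have t_ge0 : 0 <= t by rewrite invr_ge0 sqrtr_ge0.
have tN : t ^+ 2 * (N ^ d)%N%:R = 1 by rewrite exprVn sqr_sqrtr ?ltW // mulVf ?gt_eqF.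
pose x : X -> V := box_restrict N (fun _ => t%:C%C *: h).
have [x_l2 x_sup] : in_l2 ip x /\ sup (PS x) = \sum_(a <- box d N) ipnorm ip (x a) ^+ 2.
  by apply: in_l2_box => // a /negbTE a_out; rewrite /x /box_restrict a_out.
have x1 : l2norm ip x <= 1.
  rewrite /l2norm x_sup (eq_big_seq (fun _ => ipnorm ip (t%:C%C *: h) ^+ 2)); last first.
    by move=> a a_box; rewrite /x /box_restrict a_box.
  rewrite sum_box_const (ipnormZ hip) normc_real ger0_norm // exprMn -mulr_natr.
  by rewrite mulrAC tN mul1r sqrtr_sqr ger0_norm ?ipnorm_ge0.
have [Tx_l2 Tx_le] := T_le x_l2 x1.
have S_ge0 : 0 <= S := le_trans (sqrtr_ge0 _) Tx_le.
pose Dv : X := [multinom msize p | _ < d].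
have pts_uniq : uniq [seq (a + Dv)%MM | a <- box d M].
  by rewrite map_inj_uniq ?box_uniq //; apply: addIm.
have := le_l2_sup Tx_l2 pts_uniq; rewrite big_map.
rewrite (eq_big_seq (fun _ => (t * ipnorm ip (op_poly A p h)) ^+ 2)); last first.
  move=> a /boxP a_lt; rewrite /x (op_poly_multishift_interior linA) => [|j]; last first.
    by rewrite mnmDE mnmE leq_addl /N ltn_add2r a_lt.
  by rewrite (linear_opZ (linear_op_poly p linA)) (ipnormZ hip) normc_real ger0_norm.
rewrite sum_box_const => le_sup.
have sup_le : sup (PS (op_poly T p x)) <= S ^+ 2.
  by rewrite -ler_sqrt ?sqr_ge0 // sqrtr_sqr ger0_norm.
have := ler_wpM2r (ltW Nd_gt0) (le_trans le_sup sup_le).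
set n := ipnorm ip _; have -> // : (t * n) ^+ 2 *+ (M ^ d) * (N ^ d)%N%:R = (M ^ d)%N%:R * n ^+ 2.
by rewrite mulrnAl -mulr_natl exprMn mulrAC tN mul1r.
Qed.

End BoxTest.

Section VonNeumann.
Variables (R : realType) (V : lmodType R[i]) (ip : V -> V -> R[i]).
Hypothesis hip : is_inner_product ip.
Variable d : nat.
Variable A : 'I_d -> V -> V.
Hypothesis cA : forall j, is_contraction ip (A j).
Let linA j : is_linear_op (A j) := (cA j).1.
Local Notation T := (multishift (fun (j : 'I_d) (_ : 'X_{1..d}) => A j)).

Lemma von_neumann_multishift : von_neumann [set: V] (ipnorm ip) A ->
  von_neumann (@in_l2 R V ip d) (@l2norm R V ip d) T.
Proof.
move=> vnA p; set S := poly_sup_norm p.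
have rot_le c : unimodular c ->
    forall y, ipnorm ip y <= 1 -> ipnorm ip (op_poly A (mrotate c p) y) <= S.
  move=> c1 y y1; rewrite /S -(poly_sup_norm_mrotate p c1); apply: le_trans (vnA _).
  apply: (le_op_norm (K := coef_norm1 (mrotate c p))) => // z _ z1.
  apply: le_trans (ipnorm_op_poly_le hip _ _ cA) _.
  by rewrite ler_piMr ?coef_norm1_ge0.
have S_ge0 : 0 <= S.
  apply: le_trans (rot_le _ (fun j => Normc.normc1 _) 0 _); first exact: ipnorm_ge0.
  by rewrite ipnorm0 ?ler01.
have [l2_0 norm_0] := @in_l2_0 _ _ _ hip d.
apply: op_norm_le; first by exists (fun _ => 0); rewrite norm_0 ler01.
move=> x x_l2 x1; have [_ Tx_le] := op_poly_multishift_le hip linA S_ge0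
  (fun c c1 => ipnorm_linear_le hip (linear_op_poly _ linA) (rot_le c c1)) x_l2.
by apply: le_trans Tx_le _; rewrite ler_piMr.
Qed.

Lemma von_neumann_of_multishift :
  von_neumann (@in_l2 R V ip d) (@l2norm R V ip d) T -> von_neumann [set: V] (ipnorm ip) A.
Proof.
move=> vnT p; set S := poly_sup_norm p.
have rot_le c : unimodular c ->
    forall y, ipnorm ip (op_poly A (mrotate c p) y) <= coef_norm1 p * ipnorm ip y.
  by move=> c1 y; rewrite -(coef_norm1_mrotate p c1); apply: ipnorm_op_poly_le.
have T_bound x := op_poly_multishift_le hip linA (coef_norm1_ge0 p) rot_le (x := x).
have T_le x : in_l2 ip x -> l2norm ip x <= 1 ->
    in_l2 ip (op_poly T p x) /\ l2norm ip (op_poly T p x) <= S.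
  move=> x_l2 x1; have [Tx_l2 _] := T_bound x x_l2; split => //.
  apply: le_trans (vnT p); apply: (le_op_norm (K := coef_norm1 p)) => // z z_l2 z1.
  have [_ Tz] := T_bound z z_l2; apply: le_trans Tz _.
  by rewrite ler_piMr ?coef_norm1_ge0.
have [l2_0 norm_0] := @in_l2_0 _ _ _ hip d.
have S_ge0 : 0 <= S.
  have [|_ T0_le] := T_le _ l2_0; first by rewrite norm_0 ler01.
  exact: le_trans (sqrtr_ge0 _) T0_le.
apply: op_norm_le; first by exists 0; rewrite ipnorm0 ?ler01.
move=> h _ h1; rewrite -ler_sqr ?nnegrE ?ipnorm_ge0 //.
apply: (le_of_forall_expn_ratio (D := msize p) (e := d)) => [|M M_gt0].
  exact: sqr_ge0.
exact: op_poly_box_test_le.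
Qed.

End VonNeumann.

Theorem proposition3p6 (R : realType) (V : lmodType R[i])
    (ip : V -> V -> R[i]) (hH : is_hilbert ip)
    (d : nat) (hd : (0 < d)%N)
    (A : 'I_d -> V -> V)
    (hA : forall j : 'I_d, is_contraction ip (A j))
    (hAc : commuting_tuple A) :
  von_neumann (@in_l2 R V ip d) (@l2norm R V ip d)
      (multishift (fun (j : 'I_d) (_ : 'X_{1..d}) => A j))
  <-> von_neumann (X := V) [set: V] (ipnorm ip) A.
Proof.
have hip := hH.1.
by split; [apply: von_neumann_of_multishift | apply: von_neumann_multishift].
Qed.
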